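(* Let $D\ge 1$. Any (randomized) voting rule that has access only to the top-$t$ prefix of each agent's ranking and achieves metric distortion at most $D$ has utilitarian distortion $\Omega\!\left(\frac{m\sqrt m}{D\,t\sqrt t}\right)$.
   Context: Setting: $n$ agents, $m$ alternatives; each agent has an underlying strict ranking, but the rule only receives each agent's ordered list of her top $t$ alternatives (a top-$t$ profile $\vec\sigma_t$) and outputs a probability distribution over alternatives. A full profile extends $\vec\sigma_t$ if each agent's top-$t$ prefix coincides with that in $\vec\sigma_t$. Metric framework: a pseudometric $d$ on agents and alternatives is consistent with a full profile $\vec\sigma$ if $X\succ_iY\Rightarrow d(i,X)\le d(i,Y)$, and consistent with $\vec\sigma_t$ if it is consistent with some full profile extending $\vec\sigma_t$. $\mathrm{SC}(X,d)=\sum_id(i,X)$. Metric distortion of a rule $f$: $\sup_{\vec\sigma_t}\sup_{d}\mathbb E_{X\sim f(\vec\sigma_t)}[\mathrm{SC}(X,d)]/\min_X\mathrm{SC}(X,d)$ over consistent $d$. Utilitarian framework: unit-sum nonnegative utilities $u_i$ ($\sum_Xu_i(X)=1$), consistent with a full profile if $X\succ_iY\Rightarrow u_i(X)\ge u_i(Y)$ and with $\vec\sigma_t$ if consistent with some full extension. $\mathrm{SW}(X,\vec u)=\sum_iu_i(X)$. Utilitarian distortion: $\sup_{\vec\sigma_t}\sup_{\vec u}\max_X\mathrm{SW}(X,\vec u)/\mathbb E_{X\sim f(\vec\sigma_t)}[\mathrm{SW}(X,\vec u)]$. *)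

From HB Require Import structures.
From mathcomp Require Import all_boot all_order all_algebra all_fingroup.
From mathcomp Require Import reals.
Set Implicit Arguments. Unset Strict Implicit. Unset Printing Implicit Defensive.
Import Order.TTheory GRing.Theory Num.Theory.
Local Open Scope ring_scope.

Section Voting.
Variable R : realType.

(* A full ranking over alternatives 'I_m is a permutation sending a position
   (0 = top) to the alternative at that position. *)
Definition prefers (m : nat) (s : {perm 'I_m}) (X Y : 'I_m) : bool :=
  ((s^-1)%g X < (s^-1)%g Y)%N.

Definition extends (n m t : nat) (s : 'I_n -> {perm 'I_m})
    (st : 'I_n -> t.-tuple 'I_m) : Prop :=
  forall i, tval (st i) = take t [seq s i p | p <- enum 'I_m].

Definition is_pseudometric (T : Type) (d : T -> T -> R) : Prop :=
  [/\ forall x y, 0 <= d x y, forall x, d x x = 0,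
      forall x y, d x y = d y x
    & forall x y z, d x z <= d x y + d y z].

Definition metric_consistent (n m : nat) (d : 'I_n + 'I_m -> 'I_n + 'I_m -> R)
    (s : 'I_n -> {perm 'I_m}) : Prop :=
  forall i X Y, prefers (s i) X Y -> d (inl i) (inr X) <= d (inl i) (inr Y).

Definition metric_consistent_t (n m t : nat)
    (d : 'I_n + 'I_m -> 'I_n + 'I_m -> R) (st : 'I_n -> t.-tuple 'I_m) : Prop :=
  exists s, extends s st /\ metric_consistent d s.

Definition SC (n m : nat) (d : 'I_n + 'I_m -> 'I_n + 'I_m -> R) (X : 'I_m) : R :=
  \sum_(i < n) d (inl i) (inr X).

Definition unit_sum (n m : nat) (u : 'I_n -> 'I_m -> R) : Prop :=
  forall i, (forall X, 0 <= u i X) /\ \sum_(X < m) u i X = 1.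

Definition util_consistent (n m : nat) (u : 'I_n -> 'I_m -> R)
    (s : 'I_n -> {perm 'I_m}) : Prop :=
  forall i X Y, prefers (s i) X Y -> u i Y <= u i X.

Definition util_consistent_t (n m t : nat) (u : 'I_n -> 'I_m -> R)
    (st : 'I_n -> t.-tuple 'I_m) : Prop :=
  exists s, extends s st /\ util_consistent u s.

Definition SW (n m : nat) (u : 'I_n -> 'I_m -> R) (X : 'I_m) : R :=
  \sum_(i < n) u i X.

(* A (randomized) top-t voting rule: for every number of agents n, maps a
   top-t profile to a probability distribution over alternatives. *)
Definition rule (m t : nat) := forall n : nat, ('I_n -> t.-tuple 'I_m) -> 'I_m -> R.

Definition is_rule (m t : nat) (f : rule m t) : Prop :=
  forall n st, (forall X, 0 <= f n st X) /\ \sum_(X < m) f n st X = 1.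

Definition expect (m : nat) (p : 'I_m -> R) (g : 'I_m -> R) : R :=
  \sum_(X < m) p X * g X.

(* metric distortion <= D: for every top-t profile and every consistent
   pseudometric, E[SC] <= D * min_X SC(X) (multiplicative form of the ratio). *)
Definition metric_distortion_le (m t : nat) (f : rule m t) (D : R) : Prop :=
  forall n (st : 'I_n -> t.-tuple 'I_m) d,
    is_pseudometric d -> metric_consistent_t d st ->
    forall X, expect (f n st) (SC d) <= D * SC d X.

(* utilitarian distortion >= B: the supremum of max_X SW(X) / E[SW] is >= B
   (ratio read as +oo when E[SW] = 0). *)
Definition util_distortion_ge (m t : nat) (f : rule m t) (B : R) : Prop :=
  forall B', B' < B ->
    exists n (st : 'I_n -> t.-tuple 'I_m) (u : 'I_n -> 'I_m -> R) (X : 'I_m),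
      [/\ unit_sum u, util_consistent_t u st
        & B' * expect (f n st) (SW u) < SW u X].

End Voting.

From mathcomp Require Import all_boot all_order all_algebra all_fingroup.
From mathcomp Require Import reals.
From mathcomp Require Import zify ring lra.
Import Order.TTheory GRing.Theory Num.Theory.
Set Implicit Arguments. Unset Strict Implicit. Unset Printing Implicit Defensive.

(* Cut the alternatives into blocks of t consecutive ones and let r ~ m/(4t),
   g ~ sqrt(m/t).  For every a < r there are g ordinary agents who report
   block a and value uniformly block a together with a set H of about m/2
   alternatives that nobody reports, and one special agent who reports block
   r + a and values only that block and one alternative w of H.  The cut
   metric separating H from everything else has optimal social cost 0, so a
   rule of finite metric distortion never picks H.  The cut metric separating
   the special agents and their blocks from the rest has optimal cost r while
   each special block costs r g, so the rule gives the special blocks mass at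
   most (D - 1)/(g - 1).  Hence the expected welfare is at most
   g/|H| + (D - 1)/((g - 1) t), whereas w has welfare at least r/(t + 1).
   When m < 4t the bound is below 1, the distortion of any rule. *)

Lemma prefers_index m (p : {perm 'I_m}) X Y :
  prefers p X Y =
  (index X [seq p k | k <- enum 'I_m] < index Y [seq p k | k <- enum 'I_m]).
Proof.
have idx Z : index Z [seq p k | k <- enum 'I_m] = (p^-1)%g Z.
  by rewrite -{1}(permKV p Z) index_map ?index_enum_ord //; exact: perm_inj.
by rewrite !idx.
Qed.

Lemma index_cat_upper (T : eqType) (S : pred T) (A C : seq T) X Y :
  all S A -> all (predC S) C -> Y \in A ++ C ->
  index X (A ++ C) < index Y (A ++ C) -> S Y -> S X.
Proof.
move=> /allP SA /allP SC Y_AC ltXY SY.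
have YA : Y \in A.
  by move: Y_AC; rewrite mem_cat => /orP[//|/SC]; rewrite /= SY.
apply: contraTT ltXY => nSX.
have XA : X \notin A by apply: contra nSX => /SA.
rewrite !index_cat (negbTE XA) YA -leqNgt (leq_trans _ (leq_addr _ _)) //.
by rewrite ltnW // index_mem.
Qed.

Lemma perm_extend_prefix m (s : seq 'I_m) (S : pred 'I_m) :
  uniq s -> all S s ->
  exists p : {perm 'I_m}, take (size s) [seq p k | k <- enum 'I_m] = s /\
    forall X Y, prefers p X Y -> S Y -> S X.
Proof.
move=> us Ss.
set A := s ++ [seq x <- enum 'I_m | S x && (x \notin s)].
set C := [seq x <- enum 'I_m | ~~ S x].
have SA : all S A by rewrite all_cat Ss; apply/allP => x; rewrite mem_filter => /andP[/andP[]].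
have SC : all (predC S) C by apply/allP => x; rewrite mem_filter => /andP[].
have memAC x : x \in A ++ C.
  rewrite !mem_cat !(mem_filter _ _ (enum _)) mem_enum.
  by case: (S x); case: (x \in s).
have /tuple_permP[p Lp] : perm_eq (A ++ C) (ord_tuple m).
  apply: uniq_perm => [||x]; last by rewrite memAC val_ord_tuple mem_enum.
    rewrite cat_uniq; apply/and3P; split.
    - rewrite cat_uniq us (filter_uniq _ (enum_uniq _)) andbT /=.
      by apply/hasPn => x; rewrite mem_filter => /andP[/andP[_ ->]].
    - apply/hasPn => x; rewrite mem_filter => /andP[nSx _].
      by apply: contra nSx => /(allP SA).
    - exact: filter_uniq (enum_uniq _).
  by rewrite val_ord_tuple enum_uniq.
have L_p : [seq p k | k <- enum 'I_m] = A ++ C.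
  by rewrite Lp /=; apply: eq_map => k; rewrite tnth_ord_tuple.
exists p; split; first by rewrite L_p -catA take_size_cat.
by move=> X Y; rewrite prefers_index L_p; apply: index_cat_upper.
Qed.

Lemma profile_extend_prefix n m t (st : 'I_n -> t.-tuple 'I_m) (S : 'I_n -> pred 'I_m) :
  (forall i, uniq (st i)) -> (forall i, all (S i) (st i)) ->
  exists s, extends s st /\ forall i X Y, prefers (s i) X Y -> S i Y -> S i X.
Proof.
move=> ust Sst.
have /fin_all_exists[s hs] i := perm_extend_prefix (ust i) (Sst i).
exists s; split=> [i | i]; last exact: (hs i).2.
by rewrite -(hs i).1 size_tuple.
Qed.

Definition block (m t k : nat) : t.-tuple 'I_m.+1 := [tuple inord (k * t + i) | i < t].

Section Block.
Variables (m t k : nat).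
Hypothesis block_fits : k * t + t <= m.+1.

Lemma mem_block (X : 'I_m.+1) : (X \in block m t k) = (k * t <= X < k * t + t).
Proof.
apply/mapP/idP => [[i _ ->] | /andP[le lt]].
  by rewrite inordK; have := ltn_ord i; lia.
have lt_t : X - k * t < t by lia.
exists (Ordinal lt_t); first by rewrite mem_enum.
by apply: val_inj; rewrite /= inordK subnKC //; lia.
Qed.

Lemma block_uniq : uniq (block m t k).
Proof.
rewrite -(map_inj_uniq val_inj) -map_comp (@eq_map _ _ _ (addn (k * t) \o val)).
  by rewrite map_comp val_enum_ord -iotaDl iota_uniq.
by move=> i /=; rewrite inordK //; have := ltn_ord i; lia.
Qed.

Lemma card_block : #|[set X in block m t k]| = t.
Proof. by rewrite cardsE; move/card_uniqP: block_uniq => ->; rewrite size_tuple. Qed.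

End Block.

Lemma sum_mem_block m t k r (Y : 'I_m.+1) : (k + r) * t <= m.+1 ->
  \sum_(a < r) (Y \in block m t (k + a)) = (k * t <= Y < (k + r) * t).
Proof.
elim: r => [|r IH] fits; first by rewrite big_ord0; case: leqP => //; lia.
rewrite big_ord_recr /= IH; last by lia.
rewrite mem_block; last by lia.
by case: (leqP (k * t) Y); case: (ltnP Y ((k + r) * t)); case: ltnP => //=; nia.
Qed.

Lemma card_ord_geq m k : #|[set X : 'I_m | k <= X]| = m - k.
Proof.
have -> : #|[set X : 'I_m | k <= X]| = \sum_(X < m) (k <= X).
  by rewrite -sum1_card big_mkcond; apply: eq_bigr => X _; rewrite inE; case: leqP.
elim: m => [|m IH]; first by rewrite big_ord0.
by rewrite big_ord_recr /= IH; case: leqP => /=; lia.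
Qed.

Lemma exists_floor_sqrtn q : exists s, s * s <= q < s.+1 * s.+1.
Proof.
elim: q => [|q [s /andP[lo hi]]]; first by exists 0.
by case: (ltnP q.+1 (s.+1 * s.+1)) => [hi' | lo']; [exists s | exists s.+1]; nia.
Qed.

Section Real.
Variable R : realType.
Local Open Scope ring_scope.

Lemma ler_nat_implb (b c : bool) : (b -> c) -> (b%:R : R) <= c%:R.
Proof. by case: b c => [] [] // /(_ isT). Qed.

Lemma ler_wpdiv2l (a b c : R) : 0 <= a -> 0 < c -> c <= b -> a / b <= a / c.
Proof.
move=> a0 c0 cb; rewrite ler_wpM2l // lef_pV2 ?posrE //.
exact: lt_le_trans cb.
Qed.

Definition cut_metric n m (side : 'I_n + 'I_m -> bool) : 'I_n + 'I_m -> 'I_n + 'I_m -> R :=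
  fun x y => (side x != side y)%:R.

Lemma cut_metric_pseudometric n m (side : 'I_n + 'I_m -> bool) :
  is_pseudometric (cut_metric side).
Proof.
rewrite /cut_metric; split=> [x y | x | x y | x y z]; [exact: ler0n | by rewrite eqxx |
  by rewrite eq_sym |].
by case: (side x); case: (side y); case: (side z);
  rewrite /= ?addr0 ?add0r ?ler01 ?lexx ?ler0n ?ler_wpDr.
Qed.

Lemma cut_metric_consistent_t n m t (side : 'I_n + 'I_m -> bool)
    (st : 'I_n -> t.-tuple 'I_m) :
  (forall i, uniq (st i)) -> (forall i X, X \in st i -> side (inr X) = side (inl i)) ->
  metric_consistent_t (cut_metric side) st.
Proof.
move=> ust same_side.
have Sst i : all (fun X => side (inr X) == side (inl i)) (st i).
  by apply/allP => X /same_side ->.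
have [s [ext upper]] := profile_extend_prefix ust Sst.
exists s; split=> // i X Y XY; rewrite /cut_metric !(eq_sym (side (inl i))).
by apply: ler_nat_implb; apply: contraNN; apply: upper.
Qed.

Definition uniform_util (I : Type) m (S : I -> {set 'I_m}) : I -> 'I_m -> R :=
  fun i X => (X \in S i)%:R / #|S i|%:R.

Lemma uniform_util_ge0 (I : Type) m (S : I -> {set 'I_m}) i X : 0 <= uniform_util S i X.
Proof. by rewrite divr_ge0 ?ler0n. Qed.

Lemma uniform_util_unit_sum n m (S : 'I_n -> {set 'I_m}) :
  (forall i, S i != set0) -> unit_sum (uniform_util S).
Proof.
move=> S0 i; split=> [X | ]; first exact: uniform_util_ge0.
rewrite /uniform_util -mulr_suml.
have -> : \sum_X ((X \in S i)%:R : R) = #|S i|%:R.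
  by rewrite -sumr_const [RHS]big_mkcond; apply: eq_bigr => X _; case: (X \in S i).
by rewrite divff // pnatr_eq0 -lt0n card_gt0.
Qed.

Lemma uniform_util_consistent_t n m t (S : 'I_n -> {set 'I_m}) (st : 'I_n -> t.-tuple 'I_m) :
  (forall i, uniq (st i)) -> (forall i X, X \in st i -> X \in S i) ->
  util_consistent_t (uniform_util S) st.
Proof.
move=> ust sub.
have Sst i : all (mem (S i)) (st i) by apply/allP => X /sub.
have [s [ext upper]] := profile_extend_prefix ust Sst.
exists s; split=> // i X Y XY; rewrite ler_wpM2r ?invr_ge0 ?ler0n //.
exact/ler_nat_implb/upper.
Qed.

Lemma uniform_util_le (I : Type) m (S : I -> {set 'I_m}) i X k :
  (0 < k)%N -> (k <= #|S i|)%N ->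
  uniform_util S i X <= (X \in S i)%:R / k%:R.
Proof. by move=> k0 kS; rewrite ler_wpdiv2l ?ler0n ?ltr0n ?ler_nat. Qed.

Lemma uniform_util_ge (I : Type) m (S : I -> {set 'I_m}) i X k :
  X \in S i -> (#|S i| <= k)%N ->
  1 / k%:R <= uniform_util S i X.
Proof.
move=> XS Sk; rewrite /uniform_util XS ler_wpdiv2l ?ler_nat ?ltr0n //.
by apply/card_gt0P; exists X.
Qed.

Lemma expect_ge0 m (p g : 'I_m -> R) :
  (forall X, 0 <= p X) -> (forall X, 0 <= g X) -> 0 <= expect p g.
Proof. by move=> p0 g0; apply: sumr_ge0 => X _; apply: mulr_ge0. Qed.

Lemma expect_le m (p g : 'I_m -> R) c :
  (forall X, 0 <= p X) -> \sum_X p X = 1 -> (forall X, g X <= c) -> expect p g <= c.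
Proof.
move=> p0 p1 gc; rewrite -[c]mul1r -p1 mulr_suml.
by apply: ler_sum => X _; apply: ler_wpM2l.
Qed.

Lemma expect_le0_eq0 m (p g : 'I_m -> R) X :
  (forall Y, 0 <= p Y) -> (forall Y, 0 <= g Y) -> expect p g <= 0 -> 0 < g X -> p X = 0.
Proof.
move=> p0 g0 E0 gX.
have E_eq0 : expect p g = 0 by apply/le_anti; rewrite E0 expect_ge0.
have pg0 Y : true -> 0 <= p Y * g Y by move=> _; exact: mulr_ge0.
move/eqP: (psumr_eq0P pg0 E_eq0 (i := X) isT).
by rewrite mulf_eq0 (gt_eqF gX) orbF => /eqP.
Qed.

Lemma util_distortion_ge_witness m t (f : rule R m t) (B : R) n (st : 'I_n -> t.-tuple 'I_m)
    (u : 'I_n -> 'I_m -> R) (X : 'I_m) :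
  is_rule f -> unit_sum u -> util_consistent_t u st -> 0 < SW u X ->
  B * expect (f n st) (SW u) <= SW u X -> util_distortion_ge f B.
Proof.
move=> f_rule u_unit u_cons SW_gt0 BE B' lt_B'.
exists n, st, u, X; split=> //.
have E0 : 0 <= expect (f n st) (SW u).
  apply: expect_ge0 => [Y | Y]; first exact: (f_rule n st).1.
  by apply: sumr_ge0 => i _; exact: (u_unit i).1.
have [-> | E_neq0] := eqVneq (expect (f n st) (SW u)) 0; first by rewrite mulr0.
by apply: lt_le_trans BE; rewrite ltr_pM2r // lt_def E_neq0.
Qed.

Lemma util_distortion_ge_le m t (f : rule R m t) (B B' : R) :
  B' <= B -> util_distortion_ge f B -> util_distortion_ge f B'.
Proof. by move=> le_B f_B B'' lt_B''; apply: f_B; apply: lt_le_trans le_B. Qed.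

Lemma util_distortion_ge1 m t (f : rule R m.+1 t) :
  (0 < t <= m.+1)%N -> is_rule f -> util_distortion_ge f 1.
Proof.
move=> /andP[t_gt0 fits] f_rule.
have fits0 : (0 * t + t <= m.+1)%N by rewrite mul0n.
pose S (_ : 'I_1) := [set X in block m t 0].
have top i : inord 0 \in S i by rewrite inE mem_block // inordK //; lia.
have card_S i : #|S i| = t := card_block fits0.
have SW_le Y : SW (uniform_util S) Y <= 1 / t%:R.
  by rewrite /SW big_ord1 /uniform_util card_S ler_wpM2r ?invr_ge0 ?ler0n ?lern1 ?leq_b1.
have SW_top : SW (uniform_util S) (inord 0) = 1 / t%:R.
  by rewrite /SW big_ord1 /uniform_util card_S top.
apply: (util_distortion_ge_witness (X := inord 0) f_rule).
- by apply: uniform_util_unit_sum => i; apply/set0Pn; exists (inord 0).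
- apply: uniform_util_consistent_t => [i | i X XS]; first exact: block_uniq fits0.
  by rewrite inE.
- by rewrite SW_top divr_gt0 ?ltr0n.
- have [p_ge0 p_sum1] := f_rule _ (fun _ : 'I_1 => block m t 0).
  by rewrite mul1r SW_top; exact: expect_le p_ge0 p_sum1 SW_le.
Qed.

End Real.

Section Instance.
Variable R : realType.
Variables (m t r g : nat).
Hypotheses (t_gt0 : 0 < t) (r_gt0 : 0 < r) (g_gt1 : 1 < g) (fits : 4 * r * t <= m.+1).

Local Notation agent := ('I_r * 'I_g.+1)%type.
Local Notation n := #|{: agent}|.

Definition special (x : agent) : bool := x.2 == ord_max.
Definition top_block (x : agent) : nat := if special x then r + x.1 else x.1.
Definition middle (X : 'I_m.+1) : bool := r * t <= X < 2 * r * t.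
Definition hidden : {set 'I_m.+1} := [set X : 'I_m.+1 | 2 * r * t <= X].
Definition winner : 'I_m.+1 := inord (2 * r * t).
Definition support (x : agent) : {set 'I_m.+1} :=
  [set X in block m t (top_block x)] :|: (if special x then [set winner] else hidden).
Definition profile (i : 'I_n) : t.-tuple 'I_m.+1 := block m t (top_block (enum_val i)).
Definition util : 'I_n -> 'I_m.+1 -> R :=
  uniform_util R (fun i : 'I_n => support (enum_val i)).

Lemma special_ordinary a (b : 'I_g) : special (a, widen_ord (leqnSn g) b) = false.
Proof. by rewrite /special -val_eqE /= ltn_eqF. Qed.

Lemma special_max a : special (a, ord_max).
Proof. exact: eqxx. Qed.

Lemma top_block_ordinary a (b : 'I_g) : top_block (a, widen_ord (leqnSn g) b) = a.
Proof. by rewrite /top_block special_ordinary. Qed.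

Lemma top_block_special a : top_block (a, ord_max) = r + a.
Proof. by rewrite /top_block special_max. Qed.

Lemma top_block_fits x : top_block x * t + t <= 2 * r * t.
Proof. by rewrite /top_block; have := ltn_ord x.1; case: special; nia. Qed.

Lemma top_block_fits_alternatives x : top_block x * t + t <= m.+1.
Proof. by have := top_block_fits x; nia. Qed.

Lemma top_block_not_hidden x X : X \in block m t (top_block x) -> X \notin hidden.
Proof.
rewrite mem_block ?top_block_fits_alternatives // inE -ltnNge.
by have := top_block_fits x; lia.
Qed.

Lemma middle_top_block x X : X \in block m t (top_block x) -> middle X = special x.
Proof.
rewrite mem_block ?top_block_fits_alternatives // /middle /top_block.
by have := ltn_ord x.1; case: special; case: leqP; nia.
Qed.

Lemma winner_val : winner = 2 * r * t :> nat.
Proof. by rewrite inordK //; nia. Qed.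

Lemma winner_hidden : winner \in hidden.
Proof. by rewrite inE winner_val. Qed.

Lemma card_hidden_gt0 : 0 < #|hidden|.
Proof. by apply/card_gt0P; exists winner; exact: winner_hidden. Qed.

Lemma card_hidden_large : m.+1 <= 2 * #|hidden|.
Proof. by rewrite card_ord_geq; nia. Qed.

Lemma mem_support_visible x X : X \notin hidden ->
  (X \in support x) = (X \in block m t (top_block x)).
Proof.
move=> /negbTE Xvis; rewrite /support in_setU inE; case: special; last by rewrite Xvis orbF.
rewrite in_set1; case: eqP => [XW | _]; last by rewrite orbF.
by move: Xvis; rewrite XW winner_hidden.
Qed.

Lemma card_support_ge x : t <= #|support x|.
Proof.
by rewrite -{1}(card_block (top_block_fits_alternatives x)) subset_leq_card ?subsetUl.
Qed.

Lemma card_support_special x : special x -> #|support x| <= t.+1.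
Proof.
rewrite /support => ->; rewrite (leq_trans (leq_card_setU _ _)) //.
by rewrite cards1 card_block ?addn1 ?top_block_fits_alternatives.
Qed.

Lemma card_support_ordinary x : ~~ special x -> #|hidden| <= #|support x|.
Proof. by rewrite /support => /negbTE ->; rewrite subset_leq_card ?subsetUr. Qed.

Lemma profile_uniq i : uniq (profile i).
Proof. exact/block_uniq/top_block_fits_alternatives. Qed.

Lemma util_unit_sum : unit_sum util.
Proof.
apply: uniform_util_unit_sum => i; rewrite -card_gt0.
exact: leq_trans t_gt0 (card_support_ge _).
Qed.

Lemma util_consistent_t : util_consistent_t util profile.
Proof.
apply: uniform_util_consistent_t => [|i X XP]; first exact: profile_uniq.
by rewrite /support !inE XP.
Qed.

Local Open Scope ring_scope.

Lemma sum_agents (F : agent -> R) :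
  \sum_(i < n) F (enum_val i) =
  \sum_(a < r) (\sum_(b < g) F (a, widen_ord (leqnSn g) b) + F (a, ord_max)).
Proof.
rewrite -(big_enum_val F) (_ : \sum_(x in _) F x = \sum_(a < r) \sum_(b < g.+1) F (a, b)).
  by apply: eq_bigr => a _; rewrite big_ord_recr.
by rewrite pair_big; apply: eq_bigr => -[].
Qed.

Lemma SW_util Y : SW util Y =
  \sum_(a < r) (\sum_(b < g) uniform_util R support (a, widen_ord (leqnSn g) b) Y
                + uniform_util R support (a, ord_max) Y).
Proof. exact: (sum_agents (fun x => uniform_util R support x Y)). Qed.

Lemma SW_winner : r%:R / t.+1%:R <= SW util winner.
Proof.
have -> : r%:R / t.+1%:R = \sum_(a < r) (1 / t.+1%:R) :> R.
  by rewrite sumr_const card_ord mul1r mulr_natl.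
rewrite SW_util.
apply: ler_sum => a _; apply: ler_wpDl.
  by apply: sumr_ge0 => b _; exact: uniform_util_ge0.
apply: uniform_util_ge; last exact/card_support_special/special_max.
by rewrite /support special_max !inE eqxx orbT.
Qed.

Lemma SW_visible Y : Y \notin hidden ->
  SW util Y <= g%:R / #|hidden|%:R * (Y < r * t)%N%:R + 1 / t%:R * (middle Y)%:R.
Proof.
move=> Yvis.
have ordinary_bound a (b : 'I_g) : uniform_util R support (a, widen_ord (leqnSn g) b) Y <=
    (Y \in block m t (0 + a))%:R / #|hidden|%:R.
  have := mem_support_visible (a, widen_ord (leqnSn g) b) Yvis.
  rewrite top_block_ordinary add0n => <-; apply: uniform_util_le; first exact: card_hidden_gt0.
  by rewrite card_support_ordinary ?special_ordinary.
have special_bound a : uniform_util R support (a, ord_max) Y <=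
    1 / t%:R * (Y \in block m t (r + a))%:R.
  have := mem_support_visible (a, ord_max) Yvis.
  rewrite top_block_special mul1r mulrC => <-.
  by apply: uniform_util_le; last exact: card_support_ge.
rewrite SW_util; apply: (@le_trans _ _ (\sum_(a < r)
    (g%:R / #|hidden|%:R * (Y \in block m t (0 + a))%:R
     + 1 / t%:R * (Y \in block m t (r + a))%:R))).
  apply: ler_sum => a _; apply: lerD; last exact: special_bound.
  apply: le_trans (ler_sum _ (fun b _ => ordinary_bound a b)) _.
  by rewrite sumr_const card_ord -[_ *+ g]mulr_natl mulrA mulrAC.
rewrite big_split /= -!mulr_sumr -!natr_sum !sum_mem_block ?mul0n ?add0n; try nia.
by rewrite /middle addnn -mul2n.
Qed.

Section Rule.
Variables (f : rule R m.+1 t) (D : R).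
Hypotheses (f_rule : is_rule f) (f_distortion : metric_distortion_le f D).
Local Notation p := (@f n profile).

Lemma card_agents_gt0 : (0 < n)%N.
Proof. by rewrite card_prod !card_ord muln_gt0 r_gt0. Qed.

Definition hidden_side (z : 'I_n + 'I_m.+1) : bool :=
  if z is inr Y then Y \in hidden else false.

Lemma rule_avoids_hidden Y : Y \in hidden -> p Y = 0.
Proof.
move=> Yh.
have cons : metric_consistent_t (cut_metric R hidden_side) profile.
  apply: cut_metric_consistent_t => [i | i X /top_block_not_hidden /negbTE //].
  exact: profile_uniq.
have SC_cut X : SC (cut_metric R hidden_side) X = (X \in hidden)%:R *+ n.
  by rewrite /SC /cut_metric /=; case: (X \in hidden); rewrite sumr_const card_ord.
have := f_distortion (cut_metric_pseudometric R hidden_side) cons ord0.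
rewrite SC_cut inE /= leqNgt !muln_gt0 r_gt0 t_gt0 /= mul0rn mulr0 => E_le0.
apply: (expect_le0_eq0 _ _ E_le0) => [X | X | ]; first exact: (f_rule profile).1.
  by rewrite SC_cut mulrn_wge0 ?ler0n.
by rewrite SC_cut Yh pmulrn_rgt0 ?ltr01 ?card_agents_gt0.
Qed.

Definition middle_side (z : 'I_n + 'I_m.+1) : bool :=
  match z with inl i => special (enum_val i) | inr Y => middle Y end.

Lemma SC_middle_cut Y :
  SC (cut_metric R middle_side) Y = r%:R * (1 + (g%:R - 1) * (middle Y)%:R).
Proof.
rewrite /SC /cut_metric /= (sum_agents (fun x => (special x != middle Y)%:R)).
rewrite [RHS]mulr_natl -[r in RHS]card_ord -sumr_const; apply: eq_bigr => a _.
under eq_bigr do rewrite special_ordinary.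
by rewrite special_max sumr_const card_ord; case: (middle Y); rewrite /= ?mulr1 ?mulr0; ring.
Qed.

Lemma rule_middle_mass : 1 + (g%:R - 1) * \sum_Y p Y * (middle Y)%:R <= D.
Proof.
have cons : metric_consistent_t (cut_metric R middle_side) profile.
  apply: cut_metric_consistent_t => [i | i X /middle_top_block //].
  exact: profile_uniq.
have := f_distortion (cut_metric_pseudometric R middle_side) cons ord0.
rewrite /expect SC_middle_cut /middle leqNgt muln_gt0 r_gt0 t_gt0 /= mulr0 addr0 mulr1.
under eq_bigr do rewrite SC_middle_cut mulrCA mulrDr mulr1 mulrCA.
rewrite -mulr_sumr big_split /= (f_rule profile).2 -mulr_sumr mulrC ler_pM2r //.
by rewrite ltr0n.
Qed.

Lemma expect_SW_le : expect p (SW util) <= g%:R / #|hidden|%:R + (D - 1) / ((g%:R - 1) * t%:R).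
Proof.
set Pm := \sum_Y p Y * (middle Y)%:R.
have p_ge0 Y : 0 <= p Y := (f_rule profile).1 Y.
have pointwise Y : p Y * SW util Y <=
    g%:R / #|hidden|%:R * (p Y * (Y < r * t)%N%:R) + 1 / t%:R * (p Y * (middle Y)%:R).
  have [/rule_avoids_hidden -> | Yvis] := boolP (Y \in hidden).
    by rewrite !mul0r !mulr0 addr0.
  by rewrite mulrCA [1 / _ * _]mulrCA -mulrDr; apply: ler_wpM2l (SW_visible Yvis).
rewrite /expect; apply: le_trans (ler_sum _ (fun Y _ => pointwise Y)) _.
rewrite big_split /= -!mulr_sumr -/Pm; apply: lerD.
  rewrite -[X in _ <= X]mulr1 ler_wpM2l ?divr_ge0 ?ler0n //.
  by apply: expect_le => // [|Y]; [exact: (f_rule profile).2 | rewrite lern1 leq_b1].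
have g1_gt0 : 0 < g%:R - 1 :> R by rewrite subr_gt0 ltr1n.
have Pm_le : Pm <= (D - 1) / (g%:R - 1).
  by rewrite ler_pdivlMr // mulrC; have := rule_middle_mass; rewrite -/Pm; lra.
have -> : (D - 1) / ((g%:R - 1) * t%:R) = 1 / t%:R * ((D - 1) / (g%:R - 1)).
  by field; rewrite (gt_eqF g1_gt0) pnatr_eq0 -lt0n t_gt0.
by rewrite ler_wpM2l ?divr_ge0 ?ler0n.
Qed.

End Rule.

Lemma util_distortion_instance (f : rule R m.+1 t) (D B : R) :
  is_rule f -> metric_distortion_le f D ->
  B * (g%:R / #|hidden|%:R + (D - 1) / ((g%:R - 1) * t%:R)) <= r%:R / t.+1%:R ->
  util_distortion_ge f B.
Proof.
move=> f_rule f_distortion B_le.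
have SW_gt0 : 0 < SW util winner by apply: lt_le_trans SW_winner; rewrite divr_gt0 ?ltr0n.
apply: (util_distortion_ge_witness f_rule util_unit_sum util_consistent_t SW_gt0).
have E_ge0 : 0 <= expect (f _ profile) (SW util).
  apply: expect_ge0 => Y; first exact: (f_rule _ profile).1.
  by apply: sumr_ge0 => i _; exact: uniform_util_ge0.
have [B_ge0 | B_lt0] := lerP 0 B; last by rewrite (le_trans _ (ltW SW_gt0)) // nmulr_rle0.
apply: le_trans SW_winner; apply: le_trans B_le.
by rewrite ler_wpM2l // expect_SW_le.
Qed.

End Instance.

Section Arithmetic.
Variable R : realType.
Local Open Scope ring_scope.

Lemma distortion_arith (x z T D G Q Rr H : R) :
  0 <= z -> z ^+ 2 = x -> 1 <= T -> 1 <= D -> 0 < H -> x * T <= 2 * H ->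
  x <= 2 * Q -> Q <= 7 * Rr ->
  G ^+ 2 <= Q -> Q <= (G + 1) ^+ 2 -> 2 <= G ->
  x * z / D * (G / H + (D - 1) / ((G - 1) * T)) <= 112 * Rr / T.
Proof.
move=> z_ge0 zx T_ge1 D_ge1 H_gt0 xT_le x_le Q_le GQ QG G_ge2.
have T_gt0 : 0 < T by lra.
have D_gt0 : 0 < D by lra.
have G1_gt0 : 0 < G - 1 by lra.
have x_ge0 : 0 <= x by rewrite -zx sqr_ge0.
have zG_le : z * G <= 14 * Rr.
  have : (z * G) ^+ 2 <= (2 * Q) ^+ 2 by rewrite exprMn zx; nra.
  by rewrite ler_pXn2r ?nnegrE ?mulr_ge0 //; [lra | nra | lra].
have z_le : z / (G - 1) <= 6.
  rewrite ler_pdivrMr //; have : z ^+ 2 <= (6 * (G - 1)) ^+ 2 by rewrite zx; nra.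
  by rewrite ler_pXn2r ?nnegrE //; nra.
have xH_le : x / H <= 2 / T by rewrite ler_pdivrMr // mulrAC ler_pdivlMr.
have -> : x * z / D * (G / H + (D - 1) / ((G - 1) * T)) =
    z * G * (x / H) * D^-1 + x * (z / (G - 1)) * ((D - 1) / D) * T^-1.
  by field; rewrite !gt_eqF.
have -> : 112 * Rr / T = 14 * Rr * (2 / T) * 1 + 14 * Rr * 6 * 1 * T^-1.
  by field; rewrite gt_eqF.
have zG_ge0 : 0 <= z * G by rewrite mulr_ge0 //; lra.
have xH_ge0 : 0 <= x / H by rewrite divr_ge0 // ltW.
have zG1_ge0 : 0 <= z / (G - 1) by rewrite divr_ge0 // ltW.
have Dr_ge0 : 0 <= (D - 1) / D by rewrite divr_ge0 ?subr_ge0 // ltW.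
apply: lerD.
  apply: ler_pM; [exact: mulr_ge0 | by rewrite invr_ge0 ltW | | by rewrite invf_le1].
  exact: ler_pM zG_ge0 xH_ge0 zG_le xH_le.
apply: ler_pM; [exact: mulr_ge0 (mulr_ge0 _ _) _ | by rewrite invr_ge0 ltW | | exact: lexx].
apply: ler_pM; [exact: mulr_ge0 | by [] | | by rewrite ler_pdivrMr //; lra].
by apply: ler_pM => //; lra.
Qed.

Lemma sqrt_ratioE (c M T D : R) : 0 < T -> 0 < D ->
  c * (M * Num.sqrt M) / (D * (T * Num.sqrt T)) = c * (M / T * (Num.sqrt M / Num.sqrt T) / D).
Proof. by move=> T_gt0 D_gt0; field; rewrite !gt_eqF ?sqrtr_gt0. Qed.

Lemma sqr_sqrt_ratio (M T : R) : 0 <= M -> 0 <= T ->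
  (Num.sqrt M / Num.sqrt T) ^+ 2 = M / T.
Proof. by move=> M_ge0 T_ge0; rewrite expr_div_n !sqr_sqrtr. Qed.

Lemma few_alternatives_bound (m t : nat) (D : R) : (0 < t)%N -> (m < 4 * t)%N -> 1 <= D ->
  1 / 256 * (m%:R * Num.sqrt m%:R) / (D * (t%:R * Num.sqrt t%:R)) <= 1.
Proof.
move=> t_gt0 m_lt D_ge1.
have T_gt0 : 0 < t%:R :> R by rewrite ltr0n.
rewrite sqrt_ratioE //; last by lra.
set x := m%:R / t%:R; set z := Num.sqrt m%:R / Num.sqrt t%:R.
have z_ge0 : 0 <= z by rewrite divr_ge0 ?sqrtr_ge0.
have zx : z ^+ 2 = x by rewrite sqr_sqrt_ratio ?ler0n.
have x_le4 : x <= 4.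
  by rewrite ler_pdivrMr // -natrM ler_nat; lia.
have xz_le : x * z / D <= 8.
  by rewrite ler_pdivrMr; [nra | lra].
by lra.
Qed.

Lemma choose_parameters (m t : nat) : (0 < t)%N -> (4 * t <= m.+1)%N ->
  exists r g : nat, [/\ (0 < r)%N, (1 < g)%N, (4 * r * t <= m.+1)%N &
    forall (D : R) (H : nat), 1 <= D -> (m.+1 <= 2 * H)%N ->
      1 / 256 * (m.+1%:R * Num.sqrt m.+1%:R) / (D * (t%:R * Num.sqrt t%:R))
        * (g%:R / H%:R + (D - 1) / ((g%:R - 1) * t%:R)) <= r%:R / t.+1%:R].
Proof.
move=> t_gt0 fits4.
set q := (m.+1 %/ t)%N.
have q_lo : (q * t <= m.+1)%N := leq_trunc_div _ _.
have q_hi : (m.+1 < q * t + t)%N by rewrite {1}(divn_eq m.+1 t) ltn_add2l ltn_pmod.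
have q_ge4 : (4 <= q)%N by rewrite leq_divRL.
have [g /andP[g_lo g_hi]] := exists_floor_sqrtn q.
exists (q %/ 4)%N, g; split; [lia | nia | nia |] => D H D_ge1 MH.
have T_ge1 : 1 <= t%:R :> R by rewrite ler1n.
have H_gt0 : 0 < H%:R :> R by rewrite ltr0n; lia.
rewrite sqrt_ratioE; [|lra|lra].
set x := m.+1%:R / t%:R; set z := Num.sqrt m.+1%:R / Num.sqrt t%:R.
have z_ge0 : 0 <= z by rewrite divr_ge0 ?sqrtr_ge0.
have zx : z ^+ 2 = x by rewrite sqr_sqrt_ratio ?ler0n.
have x_le : x <= 2 * q%:R.
  have : m.+1%:R <= (2 * q * t)%:R :> R by rewrite ler_nat; nia.
  by rewrite !natrM -ler_pdivrMr //; lra.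
have xT_le : x * t%:R <= 2 * H%:R.
  rewrite mulfVK; last by rewrite gt_eqF //; lra.
  by move: MH; rewrite -(ler_nat R) natrM.
have Q_le : q%:R <= 7 * (q %/ 4)%:R :> R.
  have : q%:R <= (7 * (q %/ 4))%:R :> R by rewrite ler_nat; lia.
  by rewrite natrM.
have GQ : g%:R ^+ 2 <= q%:R :> R by rewrite -natrX ler_nat -mulnn.
have QG : q%:R <= (g%:R + 1) ^+ 2 :> R by rewrite natr1 -natrX ler_nat -mulnn; lia.
have G_ge2 : 2 <= g%:R :> R by rewrite ler_nat; nia.
have := distortion_arith z_ge0 zx T_ge1 D_ge1 H_gt0 xT_le x_le Q_le GQ QG G_ge2.
move=> arith; apply: (le_trans (y := 1 / 256 * (112 * (q %/ 4)%:R / t%:R))).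
  by rewrite -[1 / 256 * _ * _]mulrA ler_pM2l ?divr_gt0.
rewrite -[t.+1%:R]natr1 -subr_ge0; set Rr := (q %/ 4)%:R.
have -> : Rr / (t%:R + 1) - 1 / 256 * (112 * Rr / t%:R) =
    Rr * (9 * t%:R - 7) / (16 * t%:R * (t%:R + 1)) by field; apply/andP; split; lra.
by rewrite divr_ge0 ?mulr_ge0 ?ler0n //; lra.
Qed.

End Arithmetic.

Local Open Scope ring_scope.

Theorem mainTheorem10 (R : realType) :
  exists c : R, 0 < c /\
    forall (m t : nat) (D : R), (1 <= t <= m)%N -> 1 <= D ->
    forall f : rule R m t, is_rule f -> metric_distortion_le f D ->
      util_distortion_ge f
        (c * (m%:R * Num.sqrt (m%:R : R)) / (D * (t%:R * Num.sqrt (t%:R : R)))).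
Proof.
exists (1 / 256); split=> [|m t D /andP[t_gt0 t_le_m] D_ge1 f f_rule f_distortion].
  by rewrite divr_gt0.
case: m t_le_m f f_rule f_distortion => [|m] t_le_m f f_rule f_distortion; first by lia.
have [fits4 | few] := leqP (4 * t) m.+1.
  have [r [g [r_gt0 g_gt1 fits bound]]] := choose_parameters R t_gt0 fits4.
  apply: (util_distortion_instance t_gt0 r_gt0 g_gt1 fits f_rule f_distortion).
  exact/bound/card_hidden_large.
apply: util_distortion_ge_le (util_distortion_ge1 _ f_rule); last by rewrite t_gt0.
exact: few_alternatives_bound.
Qed.
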